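(* Let $G=(V,E,p,(V_{E},V_{O}))$ be a parity game, let $\rho_0,\rho_1,\dots,\rho_t$ be a lifting sequence on $G$, and let $LH$ be the corresponding lifting history graph. If there is a path in $LH$ containing at least one edge from a node $(w,m)$ to a node $(w,m')$ (with the same vertex $w$), then $m>m'$.
   Context: A parity game $G=(V,E,p,(V_{E},V_{O}))$: finite vertex set $V$ partitioned into $V_{E}$ (Even) and $V_{O}$ (Odd), total edge relation $E$, priorities $p:V\to\mathbb{N}$; $\mathrm{post}(v)=\{w:(v,w)\in E\}$, $V_i=\{v:p(v)=i\}$. Let $d$ be one more than the largest priority. $\mathbb{M}$ consists of $\top$ and all tuples $(m_0,\dots,m_{d-1})\in\mathbb{N}^d$ with $m_i=0$ for even $i$ and $m_i\le |V_i|$ for odd $i$, ordered lexicographically with $\top$ above all tuples; $m<_i m'$ compares only positions $0..i$ lexicographically (tuples $<_i\top$, $\top=_i\top$). For $\rho:V\to\mathbb{M}$ and $w\in\mathrm{post}(v)$, $\mathrm{Prog}(\rho,v,w)$ is the least $m\in\mathbb{M}$ with $m\ge_{p(v)}\rho(w)$ if $p(v)$ is even, and with $m>_{p(v)}\rho(w)$ or $m=\rho(w)=\top$ if $p(v)$ is odd. $\mathrm{Lift}(\rho,v)$ is $\rho$ with the value at $v$ replaced by $\max\{\rho(v),\min_{w\in\mathrm{post}(v)}\mathrm{Prog}(\rho,v,w)\}$ if $v\in V_{E}$ and by $\max\{\rho(v),\max_{w\in\mathrm{post}(v)}\mathrm{Prog}(\rho,v,w)\}$ if $v\in V_{O}$.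 A lifting sequence is $\rho_0,\dots,\rho_t$ with $\rho_0$ the constant function $(0,\dots,0)$ and $\rho_{j+1}=\mathrm{Lift}(\rho_j,v_j)\neq\rho_j$ for some vertex $v_j$. The lifting history graph $LH$ of such a sequence has as nodes all pairs $(v,m)\in V\times\mathbb{M}$ such that $\rho_i(v)=m$ for some $i\le t$, and an edge from $(v,m)$ to $(w,m')$ iff $w\in\mathrm{post}(v)$ and there exists $i\le t$ with $m=\rho_i(v)>\rho_{i-1}(v)$ and either $v\ne w$ and $\rho_{i-1}(w)=\rho_i(w)=m'$, or $v=w$ and $\rho_{i-1}(v)=m'$. *)

From mathcomp Require Import all_boot.
From Stdlib Require Import Relations.
Set Implicit Arguments. Unset Strict Implicit. Unset Printing Implicit Defensive.

(* A measure in M: [None] is Top, [Some s] is the tuple s = (m_0,...,m_{d-1}). *)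
Definition meas := option (seq nat).

Fixpoint lexle (s t : seq nat) : bool :=
  match s, t with
  | x :: s', y :: t' => (x < y) || ((x == y) && lexle s' t')
  | _, _ => true
  end.
Definition lexlt (s t : seq nat) : bool := lexle s t && (s != t).

Definition Mle (m m' : meas) : bool :=
  match m, m' with
  | _, None => true
  | None, Some _ => false
  | Some s, Some t => lexle s t
  end.
Definition Mlt (m m' : meas) : bool := Mle m m' && (m != m').

Definition Mle_i (i : nat) (m m' : meas) : bool :=
  match m, m' with
  | _, None => true
  | None, Some _ => false
  | Some s, Some t => lexle (take i.+1 s) (take i.+1 t)
  end.
Definition Mlt_i (i : nat) (m m' : meas) : bool :=
  match m, m' with
  | Some _, None => true
  | None, _ => false
  | Some s, Some t => lexlt (take i.+1 s) (take i.+1 t)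
  end.

Definition Mmax (m m' : meas) : meas := if Mle m m' then m' else m.
Definition Mmin (m m' : meas) : meas := if Mle m m' then m else m'.

Section ParityGame.
(* A parity game: finite vertex set V, edge relation E (total), priorities p,
   and the Even player's vertices [evenV] (V_O is its complement). *)
Variables (V : finType) (E : rel V) (p : V -> nat) (evenV : pred V).

Definition dim : nat := (\max_(v : V) p v).+1.

Definition cntP (i : nat) : nat := #|[pred v : V | p v == i]|.

(* all tuples of M, positions i .. i+k-1 *)
Fixpoint gen_tuples (i k : nat) : seq (seq nat) :=
  match k with
  | 0 => [:: [::]]
  | k'.+1 =>
      [seq x :: s | x <- (if odd i then iota 0 (cntP i).+1 else [:: 0]),
                    s <- gen_tuples i.+1 k']
  end.

Definition allM : seq meas := None :: map Some (gen_tuples 0 dim).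

Definition inM (m : meas) : bool :=
  match m with
  | None => true
  | Some s => (size s == dim) &&
      all (fun i => if odd i then nth 0 s i <= cntP i else nth 0 s i == 0)
          (iota 0 dim)
  end.

Definition post (v : V) : pred V := E v.

Definition prog_cond (rho : V -> meas) (v w : V) (m : meas) : bool :=
  if ~~ odd (p v) then Mle_i (p v) (rho w) m
  else Mlt_i (p v) (rho w) m || ((m == None) && (rho w == None)).

(* Prog(rho,v,w) = least m in M satisfying prog_cond (Top always does) *)
Definition Prog (rho : V -> meas) (v w : V) : meas :=
  foldr Mmin None [seq m <- allM | prog_cond rho v w m].

Definition zeroM : meas := Some (nseq dim 0).

Definition Lift (rho : V -> meas) (v : V) : V -> meas :=
  fun u =>
    if u == v then
      Mmax (rho v)
        (if evenV v then \big[Mmin/None]_(w | post v w) Prog rho v w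
         else \big[Mmax/zeroM]_(w | post v w) Prog rho v w)
    else rho u.

Definition lifting_sequence (rhos : nat -> V -> meas) (t : nat) : Prop :=
  rhos 0 = (fun _ => zeroM) /\
  forall j, j < t ->
    exists v : V, rhos j.+1 = Lift (rhos j) v /\ rhos j.+1 <> rhos j.

Definition LH_node (rhos : nat -> V -> meas) (t : nat) (x : V * meas) : Prop :=
  exists i, i <= t /\ rhos i x.1 = x.2.

Definition LH_edge (rhos : nat -> V -> meas) (t : nat) (x y : V * meas) : Prop :=
  let (v, m) := x in let (w, m') := y in
  post v w /\
  exists i, 0 < i /\ i <= t /\ m = rhos i v /\ Mlt (rhos i.-1 v) (rhos i v) /\
    ((v != w /\ rhos i.-1 w = m' /\ rhos i w = m') \/
     (v = w /\ rhos i.-1 v = m')).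

End ParityGame.

(* Measures only grow along a lifting sequence, so every node (v, m) of the
   lifting history graph has a birth time: the first index at which v carries m.
   An edge out of (v, m) comes from a strict lift of v at that birth time i, and
   its target is present at time i - 1.  Along a path, birth times therefore
   strictly decrease.  For a path from (w, m) to (w, m'), the measure m' of w is
   present strictly before m is born, hence m' <= m by monotonicity and m' <> m
   because m is not yet present then. *)
From mathcomp Require Import all_boot.
From Stdlib Require Import Relations.
From mathcomp Require Import zify.

Set Implicit Arguments.
Unset Strict Implicit.
Unset Printing Implicit Defensive.

Lemma lexle_refl s : lexle s s.
Proof. by elim: s => //= x s ->; rewrite eqxx orbT. Qed.

Lemma lexle_trans s u v : size s = size u -> size u = size v ->
  lexle s u -> lexle u v -> lexle s v.
Proof.
elim: s u v => [|x s IH] [|y u] [|z v] //= [Hs] [Hu].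
case/orP=> [Hxy|/andP [/eqP <- Hsu]]; case/orP=> [Hyz|/andP [/eqP <- Huv]].
- by rewrite (ltn_trans Hxy Hyz).
- by rewrite Hxy.
- by rewrite Hyz.
- by rewrite eqxx (IH u v) // orbT.
Qed.

Lemma lexle_anti s u : size s = size u -> lexle s u -> lexle u s -> s = u.
Proof.
elim: s u => [|x s IH] [|y u] //= [Hs].
case/orP=> [Hxy|/andP [/eqP <- Hsu]]; case/orP=> [Hyx|/andP [/eqP Hyx Hus]].
- by move: (ltn_trans Hxy Hyx); rewrite ltnn.
- by move: Hxy; rewrite Hyx ltnn.
- by move: Hyx; rewrite ltnn.
- by rewrite (IH u).
Qed.

(* [lexle] is only an order on tuples of a common length, so [Mle] is only an
   order on measures whose tuples all have the same size. *)
Definition sized (d : nat) (m : meas) : bool :=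
  if m is Some s then size s == d else true.

Section SizedMeasures.
Variable d : nat.

Lemma Mle_refl a : Mle a a.
Proof. by case: a => //= s; apply: lexle_refl. Qed.

Lemma Mle_trans a b c : sized d a -> sized d b -> sized d c ->
  Mle a b -> Mle b c -> Mle a c.
Proof.
case: a => [s|]; case: b => [u|]; case: c => [v|] //= /eqP Hs /eqP Hu /eqP Hv.
by apply: lexle_trans; congruence.
Qed.

Lemma Mle_anti a b : sized d a -> sized d b -> Mle a b -> Mle b a -> a = b.
Proof.
case: a => [s|]; case: b => [u|] //= /eqP Hs /eqP Hu H1 H2.
by rewrite (@lexle_anti s u) //; congruence.
Qed.

Lemma sized_Mmin a b : sized d a -> sized d b -> sized d (Mmin a b).
Proof. by rewrite /Mmin; case: ifP. Qed.

Lemma sized_Mmax a b : sized d a -> sized d b -> sized d (Mmax a b).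
Proof. by rewrite /Mmax; case: ifP. Qed.

End SizedMeasures.

Section Lifting.
Variables (V : finType) (E : rel V) (p : V -> nat) (evenV : pred V).

Lemma size_gen_tuples i k s : s \in gen_tuples p i k -> size s = k.
Proof.
elim: k i s => [|k IH] i s /=; first by rewrite inE => /eqP ->.
by case/allpairsP => [[x y] [_ Hy ->]] /=; rewrite (IH _ _ Hy).
Qed.

Lemma sized_allM : all (sized (dim p)) (allM p).
Proof.
apply/andP; split => //; apply/allP => _ /mapP [s Hs ->].
by rewrite /sized (size_gen_tuples Hs).
Qed.

Lemma sized_Prog rho v w : sized (dim p) (Prog p rho v w).
Proof.
rewrite /Prog; elim: (allM p) sized_allM => //= a l IH /andP [Ha Hl].
by case: ifP => _ /=; [apply: sized_Mmin; last apply: IH | apply: IH].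
Qed.

Lemma sized_Lift rho v u : (forall x, sized (dim p) (rho x)) ->
  sized (dim p) (Lift E p evenV rho v u).
Proof.
move=> Hrho; rewrite /Lift; case: ifP => _ //.
apply: sized_Mmax => //; case: ifP => _.
- by apply: (big_ind (sized _)) => //; [exact: sized_Mmin | move=> *; exact: sized_Prog].
- apply: (big_ind (sized _)); [by rewrite /= size_nseq | exact: sized_Mmax |].
  by move=> *; exact: sized_Prog.
Qed.

Lemma Lift_ge rho v u : Mle (rho u) (Lift E p evenV rho v u).
Proof.
rewrite /Lift; case: ifP => [/eqP ->|_]; last exact: Mle_refl.
by rewrite /Mmax; case: ifP => // _; exact: Mle_refl.
Qed.

Variables (rhos : nat -> V -> meas) (t : nat).
Hypothesis Hseq : lifting_sequence E p evenV rhos t.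

Lemma sized_rhos j u : j <= t -> sized (dim p) (rhos j u).
Proof.
case: Hseq => H0 Hstep; elim: j u => [|j IH] u Hj.
  by rewrite H0 /= size_nseq.
have [v [-> _]] := Hstep j Hj.
by apply: sized_Lift => x; apply: IH; exact: ltnW.
Qed.

Lemma rhos_mono a b u : a <= b -> b <= t -> Mle (rhos a u) (rhos b u).
Proof.
case: Hseq => _ Hstep; elim: b => [|b IH] Hab Hb.
  by rewrite leqn0 in Hab; rewrite (eqP Hab) Mle_refl.
rewrite leq_eqVlt ltnS in Hab; case/orP: Hab => [/eqP -> | Hab].
  exact: Mle_refl.
have [v [Hlift _]] := Hstep b Hb.
have Hstep_ge : Mle (rhos b u) (rhos b.+1 u) by rewrite Hlift; exact: Lift_ge.
apply: (@Mle_trans (dim p) _ (rhos b u) _ _ _ _ (IH Hab (ltnW Hb)) Hstep_ge);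
  apply: sized_rhos; lia.
Qed.

Definition born_at (x : V * meas) (i : nat) : Prop :=
  [/\ i <= t, rhos i x.1 = x.2 & forall j, j < i -> rhos j x.1 <> x.2].

Definition present_at (x : V * meas) (k : nat) : Prop :=
  k <= t /\ rhos k x.1 = x.2.

Lemma strict_lift_born_at v i : 0 < i -> i <= t ->
  Mlt (rhos i.-1 v) (rhos i v) -> born_at (v, rhos i v) i.
Proof.
move=> Hi Hit /andP [Hle Hneq]; split => //= j Hj Hjv.
have Hge : Mle (rhos i v) (rhos i.-1 v).
  by rewrite -[in X in Mle X]Hjv; apply: rhos_mono; lia.
move/negP: Hneq; apply; apply/eqP.
by apply: (@Mle_anti (dim p)); rewrite ?sized_rhos //; lia.
Qed.

Lemma LH_edge_born_present x y : LH_edge E rhos t x y ->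
  exists i k, [/\ born_at x i, present_at y k & k < i].
Proof.
case: x y => v m [w m'] /= [_ [i [Hi [Hit [-> [Hlt Hcase]]]]]].
exists i, i.-1; split; first exact: strict_lift_born_at.
- split; first lia.
  by case: Hcase => [[_ [-> _]] | [-> ->]].
- lia.
Qed.

Lemma LH_path_born_present x y : clos_trans _ (LH_edge E rhos t) x y ->
  exists i k, [/\ born_at x i, present_at y k & k < i].
Proof.
elim=> [a b /LH_edge_born_present //|].
move=> a b c _ [i [k [Ba [_ Hb] Hki]]] _ [i' [k' [[_ _ Hnot_b] Pc Hki']]].
exists i, k'; split => //.
have : i' <= k by case: (leqP i' k) => // /Hnot_b.
lia.
Qed.

End Lifting.

Theorem proposition4 (V : finType) (E : rel V) (p : V -> nat) (evenV : pred V)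
  (Etotal : forall v : V, exists w : V, E v w)
  (rhos : nat -> V -> meas) (t : nat)
  (Hseq : lifting_sequence E p evenV rhos t)
  (w : V) (m m' : meas) :
  clos_trans (V * meas) (LH_edge E rhos t) (w, m) (w, m') ->
  Mlt m' m.
Proof.
case/(LH_path_born_present Hseq) => i [k [[Hit Hm Hnot_m] [Hkt Hm'] Hki]].
rewrite /= in Hm Hnot_m Hm'.
rewrite /Mlt -Hm' -Hm (rhos_mono Hseq w (ltnW Hki)) //=.
by apply/eqP => Heq; apply: (Hnot_m k Hki); rewrite Heq.
Qed.
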